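(* Let $e_1<e_2<e_3<e_4$ be distinct reals, $h>0$, and consider on $M_h$ the functions $\eta_1=\sum_{i<j}\ell_{ij}^2\sum_{k\ne i,j}e_k$ and $\eta_2=\sum_{i<j}\ell_{ij}^2\prod_{k\ne i,j}e_k$. For $\alpha\neq0$ and $\beta\in\mathbb R$, let $(\eta_1',\eta_2')$ be the functions obtained from the same formulas with each $e_i$ replaced by $\alpha e_i+\beta$. Then the integrable system $(\eta_1',\eta_2')$ on $M_h$ is topologically equivalent to $(\eta_1,\eta_2)$.
   Context: $\mathbf L=(\ell_{12},\ell_{13},\ell_{14},\ell_{23},\ell_{24},\ell_{34})\in\mathbb R^6\cong\mathfrak{so}(4)^*$ with the Lie–Poisson bracket of $\mathfrak{so}(4)$ (extending $\ell_{ji}=-\ell_{ij}$: $\{\ell_{ij},\ell_{jk}\}=-\ell_{ik}$ for distinct $i,j,k$, and $\{\ell_{ij},\ell_{kl}\}=0$ when $\{i,j\}\cap\{k,l\}=\emptyset$). $M_h=\{\mathbf L:\sum_{i<j}\ell_{ij}^2=2h,\ \ell_{12}\ell_{34}-\ell_{13}\ell_{24}+\ell_{14}\ell_{23}=0\}\cong S^2\times S^2$ is a symplectic leaf. Topological equivalence of integrable systems means there is a homeomorphism of the phase space mapping the Liouville foliation (connected components of fibres of the momentum map) of one system onto that of the other. *)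

From HB Require Import structures.
From mathcomp Require Import all_boot all_order all_algebra.
From mathcomp Require Import all_classical all_reals all_analysis.
Set Implicit Arguments. Unset Strict Implicit. Unset Printing Implicit Defensive.
Import Order.TTheory GRing.Theory Num.Theory.
Import numFieldNormedType.Exports.
Local Open Scope classical_set_scope.
Local Open Scope ring_scope.

Section Defs.
Variable R : realType.
Local Notation vec6 := (matrix R 1 6).

Definition l12 (L : vec6) := L ord0 (inord 0).
Definition l13 (L : vec6) := L ord0 (inord 1).
Definition l14 (L : vec6) := L ord0 (inord 2).
Definition l23 (L : vec6) := L ord0 (inord 3).
Definition l24 (L : vec6) := L ord0 (inord 4).
Definition l34 (L : vec6) := L ord0 (inord 5).

Definition Mh (h : R) : set vec6 :=
  [set L | l12 L ^+ 2 + l13 L ^+ 2 + l14 L ^+ 2 + l23 L ^+ 2 + l24 L ^+ 2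
           + l34 L ^+ 2 = 2 * h /\
           l12 L * l34 L - l13 L * l24 L + l14 L * l23 L = 0].

Definition eta1 (e1 e2 e3 e4 : R) (L : vec6) : R :=
  l12 L ^+ 2 * (e3 + e4) + l13 L ^+ 2 * (e2 + e4) + l14 L ^+ 2 * (e2 + e3)
  + l23 L ^+ 2 * (e1 + e4) + l24 L ^+ 2 * (e1 + e3) + l34 L ^+ 2 * (e1 + e2).

Definition eta2 (e1 e2 e3 e4 : R) (L : vec6) : R :=
  l12 L ^+ 2 * (e3 * e4) + l13 L ^+ 2 * (e2 * e4) + l14 L ^+ 2 * (e2 * e3)
  + l23 L ^+ 2 * (e1 * e4) + l24 L ^+ 2 * (e1 * e3) + l34 L ^+ 2 * (e1 * e2).

Definition momentum (e1 e2 e3 e4 : R) (L : vec6) : R * R :=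
  (eta1 e1 e2 e3 e4 L, eta2 e1 e2 e3 e4 L).
End Defs.

Definition liouville_leaf {T : topologicalType} {U : Type}
    (M : set T) (F : T -> U) (S : set T) : Prop :=
  exists2 x, M x & S = connected_component (M `&` (F @^-1` [set F x])) x.

Definition homeomorphism_on {T : topologicalType} (M : set T) (phi : T -> T) : Prop :=
  {within M, continuous phi} /\
  exists psi : T -> T, {within M, continuous psi} /\
    (forall x, M x -> M (phi x) /\ psi (phi x) = x) /\
    (forall y, M y -> M (psi y) /\ phi (psi y) = y).

Definition top_equivalent {T : topologicalType} {U V : Type}
    (M : set T) (F : T -> U) (G : T -> V) : Prop :=
  exists phi : T -> T, homeomorphism_on M phi /\
    (forall S, liouville_leaf M F S -> liouville_leaf M G (phi @` S)) /\
    (forall S', liouville_leaf M G S' ->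
        exists2 S, liouville_leaf M F S & phi @` S = S').

From HB Require Import structures.
From mathcomp Require Import all_boot all_order all_algebra.
From mathcomp Require Import all_classical all_reals all_analysis.
From mathcomp Require Import ring.
Import Order.TTheory GRing.Theory Num.Theory.
Import numFieldNormedType.Exports.
Local Open Scope classical_set_scope.
Local Open Scope ring_scope.

(* On the leaf [Mh h], where the Casimir [sum l_ij^2] equals [2 h], the
   shifted integrals are [eta1' = alpha eta1 + 4 beta h] and
   [eta2' = alpha^2 eta2 + alpha beta eta1 + 2 beta^2 h].  This triangular
   change of coordinates is invertible for [alpha != 0], so both momentum
   maps have the same fibres on [Mh h] and the identity is the required
   homeomorphism. *)

Lemma homeomorphism_on_id {T : topologicalType} (M : set T) :
  homeomorphism_on M id.
Proof.
have cid : {within M, continuous (@id T)}.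
  by apply: continuous_subspaceT => x; apply: cvg_id.
by split=> //; exists id.
Qed.

Lemma top_equivalent_same_fibres {T : topologicalType} {U V : Type}
    (M : set T) (F : T -> U) (G : T -> V) :
  (forall x, M x -> M `&` F @^-1` [set F x] = M `&` G @^-1` [set G x]) ->
  top_equivalent M F G.
Proof.
move=> fibresE; exists id; split; first exact: homeomorphism_on_id.
split=> S [x Mx ->].
- by rewrite image_id; exists x; rewrite ?fibresE.
- exists (connected_component (M `&` F @^-1` [set F x]) x).
    by exists x.
  by rewrite image_id fibresE.
Qed.

Lemma fibres_comp_inj {T U V : Type} {M : set T} {F : T -> U} {G : T -> V}
    {f : V -> U} :
  injective f -> (forall y, M y -> F y = f (G y)) ->
  forall x, M x -> M `&` F @^-1` [set F x] = M `&` G @^-1` [set G x].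
Proof.
move=> f_inj FE x Mx; apply/seteqP; split=> y [My /= Fy]; split=> //=.
- by apply: f_inj; rewrite -FE // -FE.
- by rewrite FE // FE // Fy.
Qed.

Section AffineChange.
Variables (R : realType) (e1 e2 e3 e4 h alpha beta : R).

Let e1' := alpha * e1 + beta.
Let e2' := alpha * e2 + beta.
Let e3' := alpha * e3 + beta.
Let e4' := alpha * e4 + beta.

Lemma eta1_affine L : Mh h L ->
  eta1 e1' e2' e3' e4' L = alpha * eta1 e1 e2 e3 e4 L + 4 * beta * h.
Proof.
case=> casimirE _; rewrite /eta1 /e1' /e2' /e3' /e4'.
have -> : 4 * beta * h = 2 * beta * (2 * h) by ring.
by rewrite -casimirE; ring.
Qed.

Lemma eta2_affine L : Mh h L ->
  eta2 e1' e2' e3' e4' L = alpha ^+ 2 * eta2 e1 e2 e3 e4 L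
    + alpha * beta * eta1 e1 e2 e3 e4 L + beta ^+ 2 * (2 * h).
Proof.
by case=> casimirE _; rewrite /eta1 /eta2 /e1' /e2' /e3' /e4' -casimirE; ring.
Qed.

Definition momentum_change (uv : R * R) : R * R :=
  (alpha * uv.1 + 4 * beta * h,
   alpha ^+ 2 * uv.2 + alpha * beta * uv.1 + beta ^+ 2 * (2 * h)).

Lemma momentum_affine L : Mh h L ->
  momentum e1' e2' e3' e4' L = momentum_change (momentum e1 e2 e3 e4 L).
Proof. by move=> ML; rewrite /momentum eta1_affine // eta2_affine. Qed.

Lemma momentum_change_inj : alpha != 0 -> injective momentum_change.
Proof.
move=> alpha_neq0 [u v] [u' v'] [/addIr/mulfI uE /addIr].
rewrite uE // => /addIr/mulfI vE.
by rewrite vE // expf_neq0.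
Qed.

End AffineChange.

Theorem lemma2 (R : realType) (e1 e2 e3 e4 h alpha beta : R) :
  e1 < e2 -> e2 < e3 -> e3 < e4 -> 0 < h -> alpha != 0 ->
  top_equivalent (Mh h)
    (momentum (alpha * e1 + beta) (alpha * e2 + beta)
              (alpha * e3 + beta) (alpha * e4 + beta))
    (momentum e1 e2 e3 e4).
Proof.
move=> _ _ _ _ alpha_neq0; apply: top_equivalent_same_fibres.
apply: (fibres_comp_inj (momentum_change_inj _ h _ beta alpha_neq0)).
exact: momentum_affine.
Qed.
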